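(* Let $K=\mathbb{F}_{q^n}$, let $\sigma$ be an automorphism of $K$ of order $n>1$ with fixed field $F=\mathbb{F}_q$, and let $f(t)=t^m-\sum_{i=0}^{m-1}a_it^i\in K[t;\sigma]$ ($a_i\in K$, $m\ge 2$) be irreducible and not right-invariant. Let $L_f=S_f\setminus\{0\}$ be the multiplicative loop of $S_f$, and let $H$ be a loop automorphism of $L_f$. Then: (i) $H(K^\times)=K^\times$ and $H|_{K^\times}=\tau$ for some group automorphism $\tau\in\mathrm{Aut}(K^\times)$. (ii) If $n\ge m-1$, then $H(t)=kt$ for some $k\in K^\times$. (iii) If $n\ge m-1$, then for all $i\in\{1,\dots,m-1\}$ and all $z\in K^\times$, $H(zt^i)=H(z)H(t)^i=\tau(z)(kt)^i=\tau(z)\Big(\prod_{l=0}^{i-1}\sigma^l(k)\Big)t^i$. (iv) If $n\ge m-1$, then $H(t^i)=H(t)^i=(kt)^i=\Big(\prod_{l=0}^{i-1}\sigma^l(k)\Big)t^i$ for all $i\in\{1,\dots,m\}$ (where $t^m$ denotes the product $t\,t^{m-1}=\sum_{i=0}^{m-1}a_it^i$ in $S_f$); in particular $H\Big(\sum_{i=0}^{m-1}a_it^i\Big)=k\sigma(k)\cdots\sigma^{m-1}(k)\sum_{i=0}^{m-1}a_it^i$.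
   Context: $R=K[t;\sigma]$ is the twisted polynomial ring: polynomials $\sum b_it^i$ with $b_i\in K$, termwise addition, and multiplication determined by $tb=\sigma(b)t$ for $b\in K$. $f$ is irreducible if it has no factorization $f=gh$ with $\deg g,\deg h<\deg f$; $f$ is right-invariant if the left ideal $Rf$ is two-sided. $S_f$ is the set of elements of $R$ of degree $<m$ with the usual addition and multiplication $g\circ h=gh \bmod_r f$, the remainder of right division of $gh$ by $f$; under the hypotheses it is a proper semifield (finite nonassociative unital division algebra), and $L_f=S_f\setminus\{0\}$ is a loop under $\circ$, in which products are written by juxtaposition and powers $t^i$ ($i<m$) are the usual ones. $K$ is embedded in $S_f$ as the constant polynomials. A loop automorphism is a bijection $H:L_f\to L_f$ with $H(xy)=H(x)H(y)$. *)

(* Twisted polynomial ring K[t;sigma] with carrier {poly K}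
   (coefficient lists; addition is the usual termwise one) and the twisted
   product (sum b_i t^i)(sum c_j t^j) = sum b_i sigma^i(c_j) t^(i+j). *)
From HB Require Import structures.
From mathcomp Require Import all_boot all_order all_algebra all_field.
Set Implicit Arguments. Unset Strict Implicit. Unset Printing Implicit Defensive.
Import GRing.Theory.
Local Open Scope ring_scope.

Section Twisted.
Variable K : fieldType.
Variable sigma : K -> K.

Definition skew_mul (p q : {poly K}) : {poly K} :=
  \poly_(k < (size p + size q)%N)
     \sum_(i < k.+1) p`_i * iter i sigma q`_(k - i).

(* remainder of right division g = q f + r, deg r < deg f (f monic) *)
Fixpoint rmod_rec (f : {poly K}) (fuel : nat) (g : {poly K}) : {poly K} :=
  match fuel with
  | 0 => g
  | k.+1 =>
      if (size g < size f)%N then g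
      else rmod_rec f k
             (g - skew_mul (lead_coef g *: 'X^(size g - size f)) f)
  end.
Definition rmod (f g : {poly K}) : {poly K} := rmod_rec f (size g) g.

Definition fpoly (m : nat) (a : 'I_m -> K) : {poly K} :=
  'X^m - \sum_(i < m) (a i)%:P * 'X^i.

Definition skew_irreducible (f : {poly K}) : Prop :=
  ~ exists g h : {poly K},
      [/\ f = skew_mul g h, (size g < size f)%N & (size h < size f)%N].

(* right-invariant: the left ideal Rf is two-sided *)
Definition right_invariant (f : {poly K}) : Prop :=
  forall g h : {poly K}, exists h' : {poly K},
    skew_mul (skew_mul h f) g = skew_mul h' f.

Definition Sf_mem (f : {poly K}) (x : {poly K}) : bool :=
  (size x < size f)%N.
Definition Lf_mem (f : {poly K}) (x : {poly K}) : bool :=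
  (x != 0) && Sf_mem f x.
Definition Sf_mul (f g h : {poly K}) : {poly K} := rmod f (skew_mul g h).

Fixpoint Sf_pow (f x : {poly K}) (i : nat) : {poly K} :=
  match i with
  | 0 => 1
  | j.+1 => Sf_mul f x (Sf_pow f x j)
  end.

Definition loop_automorphism (f : {poly K}) (H : {poly K} -> {poly K}) : Prop :=
  [/\ {in Lf_mem f, forall x, Lf_mem f (H x)},
      {in Lf_mem f &, injective H},
      (forall y, Lf_mem f y -> exists2 x, Lf_mem f x & H x = y) &
      {in Lf_mem f &, forall x y, H (Sf_mul f x y) = Sf_mul f (H x) (H y)}].
End Twisted.

Definition unit_group_aut (K : fieldType) (tau : K -> K) : Prop :=
  [/\ (forall x : K, x != 0 -> tau x != 0),
      {in predC1 0 &, injective tau},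
      (forall y : K, y != 0 -> exists2 x, x != 0 & tau x = y) &
      {in predC1 0 &, forall x y, tau (x * y) = tau x * tau y}].

Definition aut_order (K : fieldType) (sigma : K -> K) (n : nat) : Prop :=
  (forall x, iter n sigma x = x) /\
  (forall j, (0 < j < n)%N -> exists x, iter j sigma x != x).

(* S_f is a finite semifield: if x o y = 0 then, y having a left inverse modulo f
   (a left Bezout identity, by irreducibility), right multiplication by y would map
   the polynomials of degree < deg x onto S_f, which is too small.  The constants
   form the left nucleus of S_f: for deg x >= 1 and s = deg f - deg x, the
   associator of x, t^s and z is lead(x) (f z mod_r f), which cannot vanish for all
   z since f is not right-invariant.  A loop automorphism H preserves the left
   nucleus, so it permutes K^x and restricts to some tau.  Applying H to
   t o z = sigma(z) t gives H(t)_j sigma^j(tau z) = sigma(tau z) H(t)_j, and tau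
   commutes with sigma because K^x is cyclic; as tau is onto K^x, every j with
   H(t)_j <> 0 has sigma^j = sigma, which forces j = 1 once j <= n. *)

From HB Require Import structures.
From mathcomp Require Import all_boot all_order all_algebra all_field.
From mathcomp Require Import fingroup cyclic zify ring.
Set Implicit Arguments. Unset Strict Implicit. Unset Printing Implicit Defensive.
Import GRing.Theory.
Local Open Scope ring_scope.

(* [lia] treats the [size] of a polynomial reached through different structure
   coercions as distinct atoms; generalizing every [size] first identifies them. *)
Ltac size_lia :=
  repeat match goal with x := _ |- _ => subst x end;
  repeat match goal with H : context [size _] |- _ => revert H end;
  repeat match goal with |- context [size (polyseq ?p)] =>
    let n := fresh "n" in move: (size p) => n end;
  intros; lia.

Section IterRMorphism.
Variables (R : pzRingType) (s : {rmorphism R -> R}).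

Lemma iter_is_zmod_morphism i : zmod_morphism (iter i s).
Proof. by elim: i => // i IH x y /=; rewrite IH rmorphB. Qed.

Lemma iter_is_monoid_morphism i : monoid_morphism (iter i s).
Proof.
by elim: i => // i [IH1 IH2]; split=> [|x y] /=; rewrite ?IH1 ?IH2 ?rmorph1 ?rmorphM.
Qed.

HB.instance Definition _ i :=
  GRing.isZmodMorphism.Build R R (iter i s) (iter_is_zmod_morphism i).
HB.instance Definition _ i :=
  GRing.isMonoidMorphism.Build R R (iter i s) (iter_is_monoid_morphism i).

End IterRMorphism.

Lemma aut_order_iter_eq_sigma (K : fieldType) (sigma : {rmorphism K -> K}) n k :
  aut_order sigma n -> (1 < n)%N -> (k <= n)%N ->
  (forall w, iter k sigma w = sigma w) -> k = 1%N.
Proof.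
case=> _ ord gt1_n; case: k => [|[|k]] // le_kn eq_k.
  by have [x /eqP[]] := ord 1%N gt1_n; exact/esym/eq_k.
have [x /eqP[]] := ord k.+1 le_kn.
by apply: (fmorph_inj sigma); exact: eq_k.
Qed.

Section SkewPolynomial.
Variables (K : fieldType) (sigma : {rmorphism K -> K}).
Implicit Types (p q r g : {poly K}) (c d : K).

Local Notation "p ** q" := (skew_mul sigma p q) (at level 40).

Lemma coef_skew_mul p q k :
  (p ** q)`_k = \sum_(i < k.+1) p`_i * iter i sigma q`_(k - i).
Proof.
rewrite /skew_mul coef_poly; case: ltnP => // hk; symmetry; apply: big1 => i _.
have /leq_sizeP p0 := leqnn (size p); have /leq_sizeP q0 := leqnn (size q).
have [ip|/p0->] := ltnP i (size p); last by rewrite mul0r.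
by rewrite q0 ?rmorph0 ?mulr0 //; lia.
Qed.

Lemma skew_mulDl p p' q : (p + p') ** q = p ** q + p' ** q.
Proof.
apply/polyP => k; rewrite coefD !coef_skew_mul -big_split /=.
by apply: eq_bigr => i _; rewrite coefD mulrDl.
Qed.

Lemma skew_mulDr p q q' : p ** (q + q') = p ** q + p ** q'.
Proof.
apply/polyP => k; rewrite coefD !coef_skew_mul -big_split /=.
by apply: eq_bigr => i _; rewrite coefD rmorphD mulrDr.
Qed.

Lemma skew_mul0l q : 0 ** q = 0.
Proof.
by apply/polyP => k; rewrite coef0 coef_skew_mul big1 // => i _; rewrite coef0 mul0r.
Qed.

Lemma skew_mul0r p : p ** 0 = 0.
Proof.
by apply/polyP => k; rewrite coef0 coef_skew_mul big1 // => i _; rewrite coef0 rmorph0 mulr0.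
Qed.

Lemma skew_mulNl p q : (- p) ** q = - (p ** q).
Proof. by apply/eqP; rewrite -subr_eq0 opprK -skew_mulDl addNr skew_mul0l. Qed.

Lemma skew_mulBl p p' q : (p - p') ** q = p ** q - p' ** q.
Proof. by rewrite skew_mulDl skew_mulNl. Qed.

Lemma skew_mulZl c p q : (c *: p) ** q = c *: (p ** q).
Proof.
apply/polyP => k; rewrite coefZ !coef_skew_mul mulr_sumr.
by apply: eq_bigr => i _; rewrite coefZ mulrA.
Qed.

Lemma skew_mul_suml (I : Type) (s : seq I) (P : pred I) (F : I -> {poly K}) q :
  (\sum_(i <- s | P i) F i) ** q = \sum_(i <- s | P i) F i ** q.
Proof.
by elim/big_rec2: _ => [|i a b _ <-]; rewrite ?skew_mul0l ?skew_mulDl.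
Qed.

Lemma skew_mul_sumr (I : Type) (s : seq I) (P : pred I) (F : I -> {poly K}) p :
  p ** (\sum_(i <- s | P i) F i) = \sum_(i <- s | P i) p ** F i.
Proof.
by elim/big_rec2: _ => [|i a b _ <-]; rewrite ?skew_mul0r ?skew_mulDr.
Qed.

Lemma coef_skew_mulZXn c j q k :
  ((c *: 'X^j) ** q)`_k = if (j <= k)%N then c * iter j sigma q`_(k - j) else 0.
Proof.
rewrite coef_skew_mul; case: leqP => hjk.
  rewrite (bigD1 (Ordinal (leq_ltn_trans hjk (ltnSn k)))) //= big1 ?addr0.
    by rewrite coefZ coefXn eqxx mulr1.
  move=> i /eqP ij; rewrite coefZ coefXn; case: eqP => [ji|]; last by rewrite mulr0 mul0r.
  by case: ij; apply: val_inj.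
apply: big1 => i _; rewrite coefZ coefXn; case: eqP => [ji|]; last by rewrite mulr0 mul0r.
by have := ltn_ord i; lia.
Qed.

Lemma skew_mulZXn c i d j :
  (c *: 'X^i) ** (d *: 'X^j) = (c * iter i sigma d) *: 'X^(i + j).
Proof.
apply/polyP => k; rewrite coef_skew_mulZXn !coefZ !coefXn.
case: leqP => hik; last by case: eqP => [|_]; rewrite ?mulr0 //; lia.
have -> : (k - i == j)%N = (k == i + j)%N by apply/eqP/eqP; lia.
by case: eqP; rewrite ?(mulr1, mulr0, rmorph0).
Qed.

Lemma skew_mulA p q r : (p ** q) ** r = p ** (q ** r).
Proof.
have monomialA c j : ((c *: 'X^j) ** q) ** r = (c *: 'X^j) ** (q ** r).
  rewrite -[q]coefK poly_def skew_mul_sumr !skew_mul_suml skew_mul_sumr.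
  apply: eq_bigr => l _; rewrite skew_mulZXn; apply/polyP => k.
  rewrite !coef_skew_mulZXn; case: (leqP (j + l) k) => h1; case: (leqP j k) => h2.
  - by rewrite leq_subRL // h1 -subnDA iterD rmorphM mulrA.
  - lia.
  - by case: leqP => [|_]; [lia | rewrite rmorph0 mulr0].
  - by [].
by rewrite -[p]coefK poly_def !skew_mul_suml; apply: eq_bigr => j _; apply: monomialA.
Qed.

Lemma skew_mulCl c p : c%:P ** p = c *: p.
Proof.
have -> : c%:P = c *: 'X^0 by rewrite expr0 alg_polyC.
by apply/polyP => k; rewrite coef_skew_mulZXn coefZ subn0.
Qed.

Lemma skew_mul1l p : 1 ** p = p.
Proof. by rewrite -polyC1 skew_mulCl scale1r. Qed.

Lemma skew_mulXnr p j : p ** 'X^j = p * 'X^j.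
Proof.
rewrite -[p]coefK poly_def skew_mul_suml mulr_suml; apply: eq_bigr => i _.
by rewrite -[in LHS](scale1r 'X^j) skew_mulZXn rmorph1 mulr1 -scalerAl exprD.
Qed.

Lemma skew_mul1r p : p ** 1 = p.
Proof. by rewrite -(expr0 'X) skew_mulXnr expr0 mulr1. Qed.

Lemma coef_skew_mulC p c k : (p ** c%:P)`_k = p`_k * iter k sigma c.
Proof.
rewrite coef_skew_mul big_ord_recr /= subnn coefC eqxx big1 ?add0r // => i _.
by rewrite coefC subn_eq0 leqNgt ltn_ord rmorph0 mulr0.
Qed.

Lemma skew_mulXC c : 'X ** c%:P = sigma c *: 'X.
Proof.
apply/polyP => k; rewrite coef_skew_mulC coefZ coefX.
by case: eqP => [->|]; rewrite ?mul1r ?mulr1 ?mul0r ?mulr0.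
Qed.

Lemma coef_skew_mul_top p q :
  (p ** q)`_((size p).-1 + (size q).-1) =
  lead_coef p * iter (size p).-1 sigma (lead_coef q).
Proof.
have top : ((size p).-1 < ((size p).-1 + (size q).-1).+1)%N by rewrite ltnS leq_addr.
rewrite coef_skew_mul (bigD1 (Ordinal top)) //= addKn big1 ?addr0 // => i ne_i_top.
have {ne_i_top} ne_i : (i : nat) != (size p).-1.
  by apply: contraNneq ne_i_top => e; apply/eqP/val_inj.
have /leq_sizeP p0 := leqnn (size p); have /leq_sizeP q0 := leqnn (size q).
have [ip|/p0->] := ltnP i (size p); last by rewrite mul0r.
by rewrite q0 ?rmorph0 ?mulr0 //; size_lia.
Qed.

Lemma size_skew_mul_geq p q : p != 0 -> q != 0 ->
  ((size p + size q).-1 <= size (p ** q))%N.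
Proof.
move=> p0 q0; have : (p ** q)`_((size p).-1 + (size q).-1) != 0.
  by rewrite coef_skew_mul_top mulf_neq0 ?fmorph_eq0 ?lead_coef_eq0.
rewrite -size_poly_gt0 in p0; rewrite -size_poly_gt0 in q0.
apply: contraNT; rewrite -ltnNge => small; apply/eqP/(leq_sizeP _ _ (leqnn _)); size_lia.
Qed.

Lemma size_skew_div_step p g : g != 0 -> (size g <= size p)%N ->
  (size (p - ((lead_coef p / iter (size p - size g) sigma (lead_coef g))
               *: 'X^(size p - size g)) ** g)%R < size p)%N.
Proof.
move=> g0 le_gp; set d := (size p - size g)%N.
have lg0 : iter d sigma (lead_coef g) != 0 by rewrite fmorph_eq0 lead_coef_eq0.
rewrite -size_poly_gt0 in g0.
suff : (size (p - ((lead_coef p / iter d sigma (lead_coef g)) *: 'X^d) ** g)%R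
          <= (size p).-1)%N by size_lia.
apply/leq_sizeP => j hj; rewrite coefB coef_skew_mulZXn ifT; last by size_lia.
have [->|ne_j] := eqVneq j (size p).-1.
  rewrite (_ : (size p).-1 - d = (size g).-1)%N; last by size_lia.
  by rewrite -!lead_coefE divfK ?subrr.
have /leq_sizeP p0 := leqnn (size p); have /leq_sizeP g0' := leqnn (size g).
by rewrite p0 ?g0' ?rmorph0 ?mulr0 ?subrr //; size_lia.
Qed.

Lemma skew_div_exists g p : g != 0 ->
  exists s r, p = s ** g + r /\ (size r < size g)%N.
Proof.
move=> g0; move: {2}(size p) (leqnn (size p)) => N; elim: N p => [|N IH] p le_pN.
  exists 0, p; rewrite skew_mul0l add0r; split => //.
  by move: le_pN; rewrite leqn0 size_poly_eq0 => /eqP ->; rewrite size_poly0 size_poly_gt0.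
have [lt_pg|le_gp] := ltnP (size p) (size g).
  by exists 0, p; rewrite skew_mul0l add0r.
have := size_skew_div_step g0 le_gp; set m := _ *: 'X^_ => lt_step.
have [s [r [e lt_rg]]] := IH _ (leq_trans lt_step le_pN).
by exists (s + m), r; rewrite skew_mulDl addrAC -e subrK.
Qed.

End SkewPolynomial.

Lemma size_sub_eq_lead (R : nzRingType) (p q : {poly R}) :
  (0 < size p)%N -> size p = size q -> lead_coef p = lead_coef q ->
  (size (p - q)%R < size p)%N.
Proof.
move=> p0 e_size e_lead; suff : (size (p - q)%R <= (size p).-1)%N by size_lia.
apply/leq_sizeP => j; rewrite leq_eqVlt => /predU1P[<-|lt_j].
  by rewrite coefB -lead_coefE e_size -lead_coefE e_lead subrr.
have /leq_sizeP p0' := leqnn (size p); have /leq_sizeP q0 := leqnn (size q).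
by rewrite coefB p0' ?q0 ?subrr //; size_lia.
Qed.

Section RightRemainder.
Variables (K : fieldType) (sigma : {rmorphism K -> K}) (f : {poly K}).
Hypothesis monic_f : f \is monic.
Implicit Types (p q g h x y z : {poly K}) (c k : K).

Local Notation "p ** q" := (skew_mul sigma p q) (at level 40).
Local Notation rmodf := (rmod sigma f).
Local Notation Sf := (Sf_mul sigma f).
Local Notation Sp := (Sf_pow sigma f).

Let f_neq0 : f != 0. Proof. exact: monic_neq0. Qed.

Lemma rmod_recP N g : (size g <= N)%N ->
  exists Q, g = Q ** f + rmod_rec sigma f N g /\ (size (rmod_rec sigma f N g) < size f)%N.
Proof.
elim: N g => [|N IH] g /= le_gN.
  move: le_gN; rewrite leqn0 size_poly_eq0 => /eqP ->.
  by exists 0; rewrite skew_mul0l add0r size_poly0 size_poly_gt0.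
case: ltnP => [lt_gf|le_fg]; first by exists 0; rewrite skew_mul0l add0r.
have := size_skew_div_step sigma f_neq0 le_fg.
rewrite (monicP monic_f) rmorph1 divr1 => lt_step.
have [Q [e small]] := IH _ (leq_trans lt_step le_gN).
by exists (Q + lead_coef g *: 'X^(size g - size f)); rewrite skew_mulDl addrAC -e subrK.
Qed.

Lemma rmodP g : exists Q, g = Q ** f + rmodf g.
Proof. by have [Q []] := rmod_recP (leqnn (size g)); exists Q. Qed.

Lemma size_rmod g : (size (rmodf g) < size f)%N.
Proof. by have [Q []] := rmod_recP (leqnn (size g)). Qed.

Lemma rmod_unique g Q r : g = Q ** f + r -> (size r < size f)%N -> rmodf g = r.
Proof.
move=> eg small; have [Q' eg'] := rmodP g.
have e : (Q - Q') ** f = rmodf g - r.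
  have eQ : Q ** f = g - r by rewrite eg addrK.
  have eQ' : Q' ** f = g - rmodf g by rewrite {1}eg' addrK.
  by rewrite skew_mulBl eQ eQ'; ring.
apply/eqP; rewrite -subr_eq0 -e.
have [->|nz] := eqVneq (Q - Q') 0; first by rewrite skew_mul0l.
have := size_skew_mul_geq sigma nz f_neq0; rewrite e => big.
have small' : (size (rmodf g - r)%R < size f)%N.
  by apply: leq_ltn_trans (size_polyD _ _) _; rewrite size_polyN gtn_max size_rmod.
rewrite -size_poly_gt0 in nz; exfalso; size_lia.
Qed.

Lemma rmod_small g : (size g < size f)%N -> rmodf g = g.
Proof. by apply: (rmod_unique (Q := 0)); rewrite skew_mul0l add0r. Qed.

Lemma rmod_skew_mulf Q : rmodf (Q ** f) = 0.
Proof. by apply: (rmod_unique (Q := Q)); rewrite ?addr0 // size_poly0 size_poly_gt0. Qed.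

Lemma rmodD g h : rmodf (g + h) = rmodf g + rmodf h.
Proof.
have [Q eg] := rmodP g; have [Q' eh] := rmodP h.
apply: (rmod_unique (Q := Q + Q')); first by rewrite {1}eg {1}eh skew_mulDl addrACA.
by apply: leq_ltn_trans (size_polyD _ _) _; rewrite gtn_max !size_rmod.
Qed.

Lemma rmodB g h : rmodf (g - h) = rmodf g - rmodf h.
Proof.
have [Q eg] := rmodP g; have [Q' eh] := rmodP h.
apply: (rmod_unique (Q := Q - Q')); first by rewrite {1}eg {1}eh skew_mulBl; ring.
by apply: leq_ltn_trans (size_polyD _ _) _; rewrite size_polyN gtn_max !size_rmod.
Qed.

Lemma rmodZ c g : rmodf (c *: g) = c *: rmodf g.
Proof.
have [Q eg] := rmodP g.
apply: (rmod_unique (Q := c *: Q)); first by rewrite {1}eg scalerDr skew_mulZl.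
exact: leq_ltn_trans (size_scale_leq _ _) (size_rmod _).
Qed.

Lemma rmod_skew_mulmr h p : rmodf (h ** rmodf p) = rmodf (h ** p).
Proof.
have [Q ep] := rmodP p.
by rewrite [in RHS]ep skew_mulDr -skew_mulA rmodD rmod_skew_mulf add0r.
Qed.

Lemma Sf_mulCl c y : (size y < size f)%N -> Sf c%:P y = c *: y.
Proof.
by move=> small; rewrite /Sf_mul skew_mulCl rmod_small // (leq_ltn_trans (size_scale_leq _ _)).
Qed.

Lemma Sf_mulCr y c : (size y < size f)%N -> Sf y c%:P = y ** c%:P.
Proof.
move=> small; rewrite /Sf_mul rmod_small //; apply: leq_ltn_trans small.
by apply/leq_sizeP => j le_yj; rewrite coef_skew_mulC nth_default ?mul0r.
Qed.

Lemma Sf_mulBl x y z : Sf (x - y) z = Sf x z - Sf y z.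
Proof. by rewrite /Sf_mul skew_mulBl rmodB. Qed.

Lemma Sf_pow_X i : (i < (size f).-1)%N -> Sp 'X i = 'X^i.
Proof.
elim: i => [|i IH] lt_i /=; first by rewrite expr0.
rewrite IH; last by size_lia.
by rewrite /Sf_mul skew_mulXnr -exprS rmod_small // size_polyXn; size_lia.
Qed.

Lemma rmod_Xn_size m : size f = m.+1 -> rmodf 'X^m = 'X^m - f.
Proof.
move=> size_f; apply: (rmod_unique (Q := 1)); first by rewrite skew_mul1l addrC subrK.
have e : size ('X^m : {poly K}) = size f by rewrite size_polyXn.
by rewrite -[X in (_ < X)%N]e size_sub_eq_lead ?e ?size_f // lead_coefXn (monicP monic_f).
Qed.

Lemma Sf_pow_X_size m : (0 < m)%N -> size f = m.+1 -> Sp 'X m = 'X^m - f.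
Proof.
case: m => [|j] // _ size_f; rewrite -(rmod_Xn_size size_f) /= Sf_pow_X ?size_f //.
by rewrite /Sf_mul skew_mulXnr -exprS.
Qed.

Lemma Sf_pow_scaleX k i : (i < size f)%N ->
  Sp (k%:P * 'X) i = (\prod_(l < i) iter l sigma k)%:P * Sp 'X i.
Proof.
elim: i => [|i IH] lt_i /=; first by rewrite big_ord0 mul1r.
rewrite IH; last by size_lia.
rewrite Sf_pow_X; last by size_lia.
have -> : \prod_(l < i.+1) iter l sigma k = k * sigma (\prod_(l < i) iter l sigma k).
  by rewrite big_ord_recl rmorph_prod.
by rewrite /Sf_mul !mul_polyC -{1}(expr1 'X) skew_mulZXn rmodZ skew_mulXnr -exprS.
Qed.

Definition left_nucleus x :=
  forall y z, Lf_mem f y -> Lf_mem f z -> Sf (Sf x y) z = Sf x (Sf y z).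

Lemma left_nucleusC c : left_nucleus c%:P.
Proof.
move=> y z /andP[_ small_y] /andP[_ small_z].
by rewrite !Sf_mulCl ?size_rmod // /Sf_mul skew_mulZl rmodZ.
Qed.

Lemma right_invariantP :
  (forall z, (size z < size f)%N -> rmodf (f ** z) = 0) -> right_invariant sigma f.
Proof.
move=> fz0 g h; have [s [r [-> small]]] := skew_div_exists sigma g f_neq0.
have [Q eQ] := rmodP (f ** r); rewrite fz0 // addr0 in eQ.
exists (h ** (f ** s + Q)).
by rewrite skew_mulA skew_mulDr -skew_mulA eQ -skew_mulDl skew_mulA.
Qed.

Lemma left_nucleus_rmod_fmul x z : Lf_mem f x -> (1 < size x)%N -> left_nucleus x ->
  (size z < size f)%N -> rmodf (f ** z) = 0.
Proof.
rewrite /Lf_mem /Sf_mem => /andP[x0 small_x] gt1_x nucl_x small_z.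
have [->|z0] := eqVneq z 0; first by rewrite skew_mul0r rmod_small ?size_poly0 ?size_poly_gt0.
set s := (size f - size x)%N; set c := lead_coef x.
(* x o t^s = x t^s - c f, so the associator of x, t^s and z is c (f z mod_r f). *)
have c0 : c != 0 by rewrite lead_coef_eq0.
have e_xy : Sf x 'X^s = x * 'X^s - c *: f.
  apply: (rmod_unique (Q := c%:P)); first by rewrite skew_mulXnr skew_mulCl addrC subrK.
  have e_size : size (x * 'X^s) = size f by rewrite size_mulXn //; size_lia.
  rewrite -[X in (_ < X)%N]e_size size_sub_eq_lead ?e_size ?size_scale //.
    by rewrite size_poly_gt0.
  by rewrite lead_coefZ (monicP monic_f) mulr1 lead_coefM lead_coefXn mulr1.
have L_Xs : Lf_mem f 'X^s.
  apply/andP; split; first by rewrite -size_poly_gt0 size_polyXn.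
  by rewrite /Sf_mem size_polyXn; size_lia.
have := nucl_x _ _ L_Xs (introT andP (conj z0 small_z)).
rewrite e_xy /Sf_mul rmod_skew_mulmr -skew_mulA -(skew_mulXnr sigma).
rewrite skew_mulBl skew_mulZl rmodB rmodZ.
move/eqP; rewrite -subr_eq0 addrAC subrr add0r oppr_eq0 scaler_eq0 (negbTE c0).
by move/eqP.
Qed.

Lemma size_left_nucleus x : ~ right_invariant sigma f -> Lf_mem f x -> left_nucleus x ->
  (size x <= 1)%N.
Proof.
move=> not_ri Lx nucl_x; rewrite leqNgt; apply/negP => gt1_x; apply: not_ri.
by apply: right_invariantP => z; apply: left_nucleus_rmod_fmul Lx gt1_x nucl_x.
Qed.

Lemma skew_bezout y : skew_irreducible sigma f -> y != 0 -> (size y < size f)%N ->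
  exists u v, u ** y + v ** f = 1.
Proof.
move=> irr_f y0 lt_yf; pose ideal g := exists u v, u ** y + v ** f = g.
(* Euclid's algorithm inside the left ideal R y + R f: a nonzero element g of
   least degree right-divides f, hence is constant by irreducibility. *)
suff [c c0 [u [v e]]] : exists2 c, c != 0 & ideal c%:P.
  exists (c^-1 *: u), (c^-1 *: v).
  by rewrite !skew_mulZl -scalerDr e -mul_polyC -polyCM mulVf.
suff descent N g : (size g <= N)%N -> g != 0 -> (size g <= size y)%N -> ideal g ->
    exists2 c, c != 0 & ideal c%:P.
  by apply: (descent _ y) => //; exists 1, 0; rewrite skew_mul1l skew_mul0l addr0.
elim: N g => [|N IH] g le_gN g0 le_gy [u [v eg]].
  by move: le_gN; rewrite leqn0 size_poly_eq0 (negbTE g0).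
have [s [r [ef lt_rg]]] := skew_div_exists sigma f g0.
have [r0|r0] := eqVneq r 0; last first.
  apply: (IH r) => //; [size_lia | size_lia |].
  exists (- (s ** u)), (1 - s ** v).
  rewrite skew_mulNl skew_mulBl skew_mul1l !skew_mulA.
  have -> : r = f - s ** g by rewrite ef addrC addKr.
  by rewrite -eg skew_mulDr; ring.
have [le_g1|lt1_g] := leqP (size g) 1.
  have eg0 := size1_polyC le_g1.
  exists g`_0; last by rewrite -eg0; exists u, v.
  by apply: contraNneq g0 => g00; rewrite eg0 g00.
rewrite r0 addr0 in ef; case: irr_f; exists s, g; split=> //; last by size_lia.
have s0 : s != 0 by apply: contraNneq f_neq0 => s0; rewrite ef s0 skew_mul0l.
have := size_skew_mul_geq sigma s0 g0; rewrite -ef; size_lia.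
Qed.

End RightRemainder.

Section FiniteSemifield.
Variables (K : finFieldType) (sigma : {rmorphism K -> K}) (f : {poly K}).
Hypotheses (monic_f : f \is monic) (irr_f : skew_irreducible sigma f).
Implicit Types (p x y : {poly K}).

Local Notation "p ** q" := (skew_mul sigma p q) (at level 40).
Local Notation rmodf := (rmod sigma f).

Lemma Sf_mul_neq0 x y : x != 0 -> y != 0 ->
  (size x < size f)%N -> (size y < size f)%N -> Sf_mul sigma f x y != 0.
Proof.
move=> x0 y0 small_x small_y; apply/negP => /eqP xy0.
(* Since x y = 0 mod_r f, [p y mod_r f] only depends on the remainder of p by x. *)
have reduce p : exists2 r : {poly K}, (size r < size x)%N & rmodf (p ** y) = rmodf (r ** y).
  have [s [r [-> lt_rx]]] := skew_div_exists sigma p x0.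
  exists r => //; rewrite skew_mulDl skew_mulA (rmodD sigma monic_f).
  rewrite -(rmod_skew_mulmr sigma monic_f s) [rmodf (x ** y)]xy0 skew_mul0r.
  by rewrite rmod_small ?add0r // size_poly0 size_poly_gt0 monic_neq0.
have onto p : (size p < size f)%N ->
    exists2 r : {poly K}, (size r < size x)%N & rmodf (r ** y) = p.
  move=> small_p; have [u [v e]] := skew_bezout monic_f irr_f y0 small_y.
  have [r lt_rx er] := reduce (p ** u); exists r; rewrite // -er.
  apply: (rmod_unique monic_f (Q := - (p ** v))) => //.
  have ep : p ** (u ** y) + p ** (v ** f) = p by rewrite -skew_mulDr e skew_mul1r.
  by rewrite skew_mulNl !skew_mulA -[X in _ = _ + X]ep addrC addrK.
pose M := (size f).-1; pose d := (size x).-1.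
have lt_dM : (d < M)%N by rewrite -size_poly_gt0 in x0; size_lia.
pose phi (v : 'rV[K]_d) : 'rV[K]_M := poly_rV (rmodf (rVpoly v ** y)).
have : (#|'rV[K]_M| <= #|'rV[K]_d|)%N.
  apply: leq_trans (leq_image_card phi _); apply/subset_leq_card/subsetP => w _.
  have small_w : (size (rVpoly w) < size f)%N.
    by apply: leq_ltn_trans (size_poly _ _) _; size_lia.
  have [r lt_rx er] := onto _ small_w; apply/imageP; exists (poly_rV r) => //.
  by rewrite /phi poly_rV_K ?er ?rVpolyK //; size_lia.
by rewrite !card_mx !mul1n leqNgt ltn_exp2l ?finNzRing_gt1 // lt_dM.
Qed.

Lemma Lf_mul x y : Lf_mem f x -> Lf_mem f y -> Lf_mem f (Sf_mul sigma f x y).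
Proof.
move=> /andP[x0 small_x] /andP[y0 small_y].
by apply/andP; split; [exact: Sf_mul_neq0 | exact: size_rmod].
Qed.

End FiniteSemifield.

Section CyclicUnits.
Variable K : finFieldType.

Lemma finField_unit_generator :
  exists2 g : K, g != 0 & forall x : K, x != 0 -> exists e, x = g ^+ e.
Proof.
have /cyclicP [u gen_u] := field_unit_group_cyclic [set: {unit K}]%G.
exists (FinRing.uval u); first by rewrite -unitfE; case: u {gen_u}.
move=> x x0; have ux : x \is a GRing.unit by rewrite unitfE.
have : FinRing.Unit ux \in <[u]>%g by rewrite -gen_u inE.
by case/cycleP => e e_x; exists e; rewrite -FinRing.val_unitX -e_x.
Qed.

Lemma mulfun_commute (s t : K -> K) :
  (forall x, x != 0 -> s x != 0) -> (forall x, x != 0 -> t x != 0) ->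
  {in predC1 0 &, forall x y, s (x * y) = s x * s y} ->
  {in predC1 0 &, forall x y, t (x * y) = t x * t y} ->
  forall z, z != 0 -> s (t z) = t (s z).
Proof.
move=> s0 t0 sM tM; have [g g0 gen] := finField_unit_generator.
have powE (u : K -> K) : (forall x, x != 0 -> u x != 0) ->
    {in predC1 0 &, forall x y, u (x * y) = u x * u y} -> forall e, u (g ^+ e) = u g ^+ e.
  move=> u0 uM; have u1 : u 1 = 1.
    by apply: (mulIf (u0 1 (oner_neq0 K))); rewrite mul1r -uM ?mul1r // inE oner_neq0.
  by elim=> [|e IH]; rewrite ?expr0 // !exprS uM ?IH // !inE ?expf_neq0.
move=> z z0; have [e ->] := gen z z0.
have [a ea] := gen _ (s0 _ g0); have [b eb] := gen _ (t0 _ g0).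
rewrite (powE t) // eb -exprM (powE s) // ea -exprM.
by rewrite (powE s) // ea -exprM (powE t) // eb -exprM mulnCA.
Qed.

End CyclicUnits.

Section LoopAutomorphism.
Variables (K : finFieldType) (sigma : {rmorphism K -> K}) (f : {poly K}).
Hypotheses (monic_f : f \is monic) (irr_f : skew_irreducible sigma f).
Hypotheses (not_ri_f : ~ right_invariant sigma f) (gt2_f : (2 < size f)%N).
Variable H : {poly K} -> {poly K}.
Hypothesis aut_H : loop_automorphism sigma f H.
Implicit Types (x y : {poly K}) (c z : K).

Local Notation L := (Lf_mem f).
Local Notation Sf := (Sf_mul sigma f).
Local Notation Sp := (Sf_pow sigma f).

Let H_L x : L x -> L (H x). Proof. by case: aut_H => HL _ _ _; apply: HL. Qed.
Let H_inj x y : L x -> L y -> H x = H y -> x = y.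
Proof. by case: aut_H => _ inj _ _; apply: inj. Qed.
Let H_onto y : L y -> exists2 x, L x & H x = y.
Proof. by case: aut_H => _ _ onto _; apply: onto. Qed.
Let H_mul x y : L x -> L y -> H (Sf x y) = Sf (H x) (H y).
Proof. by case: aut_H => _ _ _ mul; apply: mul. Qed.

Lemma Lf_C c : c != 0 -> L c%:P.
Proof.
by move=> c0; apply/andP; split; rewrite ?polyC_eq0 // /Sf_mem size_polyC c0; size_lia.
Qed.

Lemma Lf_X : L 'X.
Proof. by apply/andP; split; rewrite ?polyX_eq0 // /Sf_mem size_polyX. Qed.

Lemma Lf1 : L 1.
Proof. by rewrite -polyC1; apply: Lf_C; rewrite oner_neq0. Qed.

Lemma Lf_pow x i : L x -> L (Sp x i).
Proof. by move=> Lx; elim: i => [|i IH] /=; [exact: Lf1 | exact: Lf_mul]. Qed.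

Lemma loop_aut1 : H 1 = 1.
Proof.
have /andP[H1_0 small_H1] := H_L Lf1.
have e : Sf (H 1) (H 1) = H 1.
  by rewrite -H_mul ?Lf1 // -polyC1 Sf_mulCl ?scale1r // size_polyC; size_lia.
have : Sf (H 1 - 1) (H 1) = 0.
  by rewrite Sf_mulBl // e -polyC1 Sf_mulCl // scale1r subrr.
apply: contra_eq; rewrite -subr_eq0 => nz; apply: Sf_mul_neq0 => //.
apply: leq_ltn_trans (size_polyD _ _) _.
by rewrite size_polyN gtn_max size_poly1; apply/andP; split => //; size_lia.
Qed.

Lemma loop_aut_pow x i : L x -> H (Sp x i) = Sp (H x) i.
Proof.
move=> Lx; elim: i => [|i IH] /=; first exact: loop_aut1.
by rewrite H_mul ?Lf_pow // IH.
Qed.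

Lemma left_nucleus_loop_aut x : L x -> left_nucleus sigma f (H x) <-> left_nucleus sigma f x.
Proof.
move=> Lx; split=> nucl y z Ly Lz.
  apply: H_inj; rewrite ?Lf_mul //.
  by rewrite !H_mul ?Lf_mul // nucl ?H_L.
have [y' Ly' <-] := H_onto Ly; have [z' Lz' <-] := H_onto Lz.
by rewrite -!H_mul ?Lf_mul // nucl.
Qed.

Lemma Lf_const x : L x -> (size x <= 1)%N -> exists2 c, c != 0 & x = c%:P.
Proof.
move=> /andP[x0 _] le_x1; have ex := size1_polyC le_x1.
by exists x`_0 => //; apply: contraNneq x0 => x00; rewrite ex x00.
Qed.

Lemma loop_aut_const c : c != 0 -> exists2 c', c' != 0 & H c%:P = c'%:P.
Proof.
move=> c0; have LHc := H_L (Lf_C c0); apply: Lf_const => //.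
apply: (size_left_nucleus monic_f not_ri_f LHc).
by apply/(left_nucleus_loop_aut (Lf_C c0)); exact: left_nucleusC.
Qed.

Lemma loop_aut_const_surj c' : c' != 0 -> exists2 c, c != 0 & H c%:P = c'%:P.
Proof.
move=> c0; have [x Lx Hx] := H_onto (Lf_C c0).
have [|c c_neq0 ex] := Lf_const Lx; last by exists c; rewrite // -ex.
apply: (size_left_nucleus monic_f not_ri_f Lx).
by apply/(left_nucleus_loop_aut Lx); rewrite Hx; exact: left_nucleusC.
Qed.

Definition tauH z := (H z%:P)`_0.

Lemma loop_aut_tauH z : z != 0 -> H z%:P = (tauH z)%:P.
Proof. by move=> z0; have [c' _ e] := loop_aut_const z0; rewrite /tauH e coefC. Qed.

Lemma tauH_neq0 z : z != 0 -> tauH z != 0.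
Proof. by move=> z0; have [c' c0 e] := loop_aut_const z0; rewrite /tauH e coefC. Qed.

Lemma tauH_unit_group_aut : unit_group_aut tauH.
Proof.
split.
- exact: tauH_neq0.
- move=> x y; rewrite !inE => x0 y0 e.
  by apply/polyC_inj/H_inj; rewrite ?Lf_C // !loop_aut_tauH // e.
- move=> y y0; have [c c0 e] := loop_aut_const_surj y0.
  by exists c => //; rewrite /tauH e coefC.
- move=> x y; rewrite !inE => x0 y0; apply/polyC_inj.
  have SfCC c d : Sf c%:P d%:P = (c * d)%:P.
    rewrite Sf_mulCl -?mul_polyC -?polyCM //.
    by apply: leq_ltn_trans (size_polyC_leq1 d) _; size_lia.
  by rewrite -loop_aut_tauH ?mulf_neq0 // -SfCC H_mul ?Lf_C // !loop_aut_tauH // SfCC.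
Qed.

Lemma tauH_sigma z : z != 0 -> tauH (sigma z) = sigma (tauH z).
Proof.
have [_ _ _ tauM] := tauH_unit_group_aut.
apply: mulfun_commute => [x|x|//|x y _ _]; rewrite ?fmorph_eq0 ?rmorphM //.
exact: tauH_neq0.
Qed.

Lemma loop_aut_X n : (1 < n)%N -> aut_order sigma n -> ((size f).-2 <= n)%N ->
  exists2 k, k != 0 & H 'X = k%:P * 'X.
Proof.
move=> gt1_n ord le_fn; set Y := H 'X.
have /andP[Y0 small_Y] : L Y := H_L Lf_X; rewrite /Sf_mem in small_Y.
have commY z j : z != 0 -> Y`_j * iter j sigma (tauH z) = sigma (tauH z) * Y`_j.
  move=> z0; have sz0 : sigma z != 0 by rewrite fmorph_eq0.
  have e : Sf 'X z%:P = Sf (sigma z)%:P 'X.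
    by rewrite Sf_mulCr ?Sf_mulCl ?size_polyX // skew_mulXC.
  have := congr1 H e; rewrite !H_mul ?Lf_X ?Lf_C // !loop_aut_tauH // Sf_mulCr // Sf_mulCl //.
  by rewrite tauH_sigma // => /polyP/(_ j); rewrite coef_skew_mulC coefZ.
have Y_eq0 j : j != 1%N -> Y`_j = 0.
  move=> ne_j1; apply/eqP; apply: contraT => Yj0; case/eqP: ne_j1.
  have lt_jY : (j < size Y)%N.
    by rewrite ltnNge; apply: contra Yj0 => le_Yj; rewrite nth_default.
  apply: (aut_order_iter_eq_sigma ord gt1_n); first by size_lia.
  move=> w; have [->|w0] := eqVneq w 0; first by rewrite !rmorph0.
  have [_ _ onto _] := tauH_unit_group_aut; have [z z0 <-] := onto w w0.
  by apply: (mulfI Yj0); rewrite commY // mulrC.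
exists Y`_1.
  apply: contraNneq Y0 => Y10; apply/eqP/polyP => j; rewrite coef0.
  by case: (eqVneq j 1%N) => [->|/Y_eq0].
rewrite mul_polyC; apply/polyP => j; rewrite coefZ coefX.
by case: (eqVneq j 1%N) => [->|/Y_eq0 ->]; rewrite ?mulr1 ?mulr0.
Qed.

Lemma loop_aut_CXnM z i : z != 0 -> (i < (size f).-1)%N ->
  H (z%:P * 'X^i) = Sf (H z%:P) (Sp (H 'X) i).
Proof.
move=> z0 lt_i; rewrite -loop_aut_pow ?Lf_X // -H_mul ?Lf_C ?Lf_pow ?Lf_X //.
by rewrite Sf_pow_X // Sf_mulCl ?mul_polyC // size_polyXn; size_lia.
Qed.

Lemma loop_aut_CXnE k z i : H 'X = k%:P * 'X -> z != 0 -> (i < (size f).-1)%N ->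
  H (z%:P * 'X^i) = (tauH z * \prod_(l < i) iter l sigma k)%:P * 'X^i.
Proof.
move=> Hk z0 lt_i; rewrite loop_aut_CXnM // Hk loop_aut_tauH //.
rewrite Sf_pow_scaleX ?Sf_pow_X //; last by size_lia.
rewrite Sf_mulCl ?mul_polyC ?scalerA //.
by apply: leq_ltn_trans (size_scale_leq _ _) _; rewrite size_polyXn; size_lia.
Qed.

End LoopAutomorphism.

Lemma fpoly_monic_size (K : fieldType) (m : nat) (a : 'I_m -> K) :
  fpoly a \is monic /\ size (fpoly a) = m.+1.
Proof.
have small : (size (- \sum_(i < m) (a i)%:P * 'X^i) < size ('X^m : {poly K}))%N.
  rewrite size_polyN size_polyXn ltnS; apply/leq_sizeP => j le_mj.
  rewrite coef_sum big1 // => i _; rewrite coefCM coefXn.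
  by case: eqP => [ji|]; rewrite ?mulr0 //; have := ltn_ord i; lia.
split; first by apply/monicP; rewrite lead_coefDl // lead_coefXn.
by rewrite /fpoly size_polyDl // size_polyXn.
Qed.

Theorem mainTheorem1 (K : finFieldType) (q n : nat)
  (sigma : {rmorphism K -> K})
  (hn : (1 < n)%N) (hord : aut_order sigma n)
  (hK : #|K| = (q ^ n)%N) (hF : #|[set x : K | sigma x == x]| = q)
  (m : nat) (hm : (2 <= m)%N) (a : 'I_m -> K)
  (hirr : skew_irreducible sigma (fpoly a))
  (hnri : ~ right_invariant sigma (fpoly a))
  (H : {poly K} -> {poly K})
  (hH : loop_automorphism sigma (fpoly a) H) :
  let f := fpoly a in
  let cprod k i := \prod_(l < i) iter l sigma k in
  (* (i) *)
  (forall c : K, c != 0 -> exists2 c' : K, c' != 0 & H c%:P = c'%:P) /\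
  (forall c' : K, c' != 0 -> exists2 c : K, c != 0 & H c%:P = c'%:P) /\
  exists tau : K -> K,
    [/\ unit_group_aut tau,
        (forall z : K, z != 0 -> H z%:P = (tau z)%:P) &
        ((m - 1 <= n)%N ->
         exists2 k : K, k != 0 &
           [/\ (* (ii) *) H 'X = k%:P * 'X,
               (* (iii) *)
               (forall (i : nat) (z : K), (1 <= i <= m - 1)%N -> z != 0 ->
                  H (z%:P * 'X^i) = Sf_mul sigma f (H z%:P) (Sf_pow sigma f (H 'X) i)
                  /\ Sf_pow sigma f (H 'X) i = Sf_pow sigma f (k%:P * 'X) i
                  /\ H (z%:P * 'X^i) = (tau z * cprod k i)%:P * 'X^i),
               (* (iv) *)
               (forall i : nat, (1 <= i <= m)%N ->
                  H (Sf_pow sigma f 'X i) = Sf_pow sigma f (H 'X) i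
                  /\ Sf_pow sigma f (H 'X) i = Sf_pow sigma f (k%:P * 'X) i
                  /\ Sf_pow sigma f (k%:P * 'X) i = (cprod k i)%:P * Sf_pow sigma f 'X i) &
               H (\sum_(i < m) (a i)%:P * 'X^i) =
                 (cprod k m)%:P * \sum_(i < m) (a i)%:P * 'X^i])].
Proof.
move=> f cprod; rewrite {}/cprod.
have [monic_f size_f] : f \is monic /\ size f = m.+1 := fpoly_monic_size a.
have gt2_f : (2 < size f)%N by rewrite size_f.
have top : Sf_pow sigma f 'X m = \sum_(i < m) (a i)%:P * 'X^i.
  by rewrite Sf_pow_X_size ?(ltnW hm) // /f /fpoly opprB addrC subrK.
split; first exact: (loop_aut_const monic_f hirr hnri gt2_f hH).
split; first exact: (loop_aut_const_surj monic_f hirr hnri gt2_f hH).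
exists (tauH H); split; first exact: (tauH_unit_group_aut monic_f hirr hnri gt2_f hH).
  exact: (loop_aut_tauH monic_f hirr hnri gt2_f hH).
move=> le_mn; have le_fn : ((size f).-2 <= n)%N by rewrite size_f; size_lia.
have [k k0 Hk] := loop_aut_X monic_f hirr hnri gt2_f hH hn hord le_fn.
have pow_kX i : (i <= m)%N -> Sf_pow sigma f (k%:P * 'X) i =
    (\prod_(l < i) iter l sigma k)%:P * Sf_pow sigma f 'X i.
  by move=> le_im; apply: Sf_pow_scaleX; size_lia.
exists k => //; split => // [i z /andP[_ le_im] z0 | i /andP[_ le_im] |].
- have lt_i : (i < (size f).-1)%N by size_lia.
  split; first exact: (loop_aut_CXnM monic_f hirr gt2_f hH).
  by rewrite Hk; split=> //; exact: (loop_aut_CXnE monic_f hirr hnri gt2_f hH).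
- by rewrite (loop_aut_pow monic_f hirr gt2_f hH _ (Lf_X gt2_f)) Hk pow_kX.
- by rewrite -top (loop_aut_pow monic_f hirr gt2_f hH _ (Lf_X gt2_f)) Hk pow_kX.
Qed.
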